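(* Let $\mathrm{cleaf}_3:\mathbb{R}\to\mathbb{R}$ be the leaf function of basis $3$. For every real $l$, writing $c=\mathrm{cleaf}_3(l)$, $$\Bigl(\mathrm{cleaf}_3\Bigl(\frac l2\Bigr)\Bigr)^2=\frac{c^2-1}{4c^2+2}+\frac{\sqrt3\sqrt{1+c^2+c^4}}{2\sqrt{1+4c^2+4c^4}}+\frac{\sqrt3\,c\sqrt{-3-6c^2+2\sqrt3\,(1+2c^2)\sqrt{1+c^2+c^4}}}{2(1+2c^2)^{3/2}}.$$
   Context: For a natural number $n$, the leaf function $\mathrm{cleaf}_n:\mathbb{R}\to\mathbb{R}$ is the solution of $\frac{\mathrm{d}^2r}{\mathrm{d}l^2}=-n\,r^{2n-1}$ with $r(0)=1$, $r'(0)=0$. *)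

From Stdlib Require Import Reals.
From Coquelicot Require Import Coquelicot.
Open Scope R_scope.

(* f is the leaf function cleaf_n : R -> R, i.e. a (global, twice
   differentiable) solution of  r'' = - n r^(2n-1),  r(0) = 1, r'(0) = 0.
   Such a solution is unique, so quantifying over all f with [is_cleaf n f]
   is the same as speaking about "the" leaf function. *)
Definition is_cleaf (n : nat) (f : R -> R) : Prop :=
  exists df : R -> R,
    (forall x, is_derive f x (df x)) /\
    (forall x, is_derive df x (- INR n * f x ^ (2 * n - 1))) /\
    f 0 = 1 /\ df 0 = 0.

From Stdlib Require Import Reals Lra Lia.
From Coquelicot Require Import Coquelicot.
Open Scope R_scope.

(* Since f'' = -3 f^5 with f(0) = 1, f'(0) = 0, the energy f'^2 + f^6 is constantly 1, so
   |f| <= 1 and, for a smooth g, (g o f)'' = (1 - f^6) g''(f) - 3 f^5 g'(f).  For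
   dbl(z) = (2z^4 + 2z^2 - 1) / sqrt (1 + 8z^2 + 8z^6 - 8z^8) a polynomial identity turns this
   into -12 (dbl o f)^5.  Hence dbl o f and t |-> f(2t) solve the same equation u'' = -12 u^5
   with the same initial data; both are bounded by 1, where the equation is Lipschitz, so they
   coincide by Gronwall's lemma: f(2t) = dbl(f(t)).  The stated formula inverts this
   duplication formula: with c = dbl(z) every radical on the right-hand side is an explicit
   expression in z, and the right-hand side collapses to z^2. *)

Lemma is_derive_mvt (h dh : R -> R) (a b : R) :
  (forall x, is_derive h x (dh x)) -> exists c, h b - h a = dh c * (b - a).
Proof.
intros Hh.
destruct (MVT_cor4 h dh a (Rabs (b - a)) (fun c _ => Hh c) b (Rle_refl _)) as [c [Hc _]].
now exists c.
Qed.

Lemma is_derive_0_const (h : R -> R) : (forall x, is_derive h x 0) -> forall x, h x = h 0.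
Proof.
intros Hh x. destruct (is_derive_mvt h (fun _ => 0) 0 x Hh) as [c Hc]. lra.
Qed.

Lemma gronwall_zero (E dE : R -> R) (K : R) :
  (forall x, is_derive E x (dE x)) -> (forall x, 0 <= E x) ->
  (forall x, Rabs (dE x) <= K * E x) -> E 0 = 0 -> forall x, E x = 0.
Proof.
intros HE Hpos Hbound HE0 x.
(* For s the sign of x, E t * exp (- K s t) is nonincreasing along s and vanishes at 0. *)
set (s := if Rle_dec 0 x then 1 else -1).
assert (Hs : s * s = 1 /\ 0 <= s * x) by (unfold s; destruct Rle_dec; split; lra).
set (h t := E t * exp (- K * s * t)).
set (dh t := (dE t - K * s * E t) * exp (- K * s * t)).
assert (Hh : forall t, is_derive h t (dh t)).
{ intros t. unfold h, dh. auto_derive.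
  - eexists; apply HE.
  - rewrite (is_derive_unique (fun y : R => E y) _ _ (HE t)). ring. }
destruct (is_derive_mvt h dh 0 x Hh) as [c Hc].
assert (Hdh : s * dh c <= 0).
{ assert (s * dE c <= K * E c).
  { apply (Rle_trans _ (Rabs (s * dE c))); [apply Rle_abs |].
    rewrite Rabs_mult.
    replace (Rabs s) with 1 by (unfold s; destruct Rle_dec; rewrite ?Rabs_R1, ?Rabs_m1; lra).
    rewrite Rmult_1_l. apply Hbound. }
  assert (0 < exp (- K * s * c)) by apply exp_pos.
  assert (s * (dE c - K * s * E c) <= 0).
  { replace (s * (dE c - K * s * E c)) with (s * dE c - K * (s * s) * E c) by ring.
    rewrite (proj1 Hs). lra. }
  unfold dh. nra. }
assert (Hh0 : h 0 = 0) by (unfold h; rewrite HE0; ring).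
assert (h x <= 0).
{ replace (h x) with (h 0 + (s * dh c) * (s * x))
    by (replace ((s * dh c) * (s * x)) with ((s * s) * (dh c * (x - 0))) by ring;
        rewrite (proj1 Hs); lra).
  nra. }
specialize (Hpos x). assert (0 < exp (- K * s * x)) by apply exp_pos. unfold h in *. nra.
Qed.

Lemma Rabs_pow_sub_le (k : nat) (u v : R) :
  -1 <= u <= 1 -> -1 <= v <= 1 -> Rabs (u ^ k - v ^ k) <= INR k * Rabs (u - v).
Proof.
intros Hu Hv.
destruct (MVT_abs (fun x => x ^ k) (fun x => INR k * x ^ pred k) v u
            (fun c _ => derivable_pt_lim_pow c k)) as [c [Hc Hcuv]].
rewrite Hc, Rabs_mult, (Rabs_pos_eq (INR k)) by apply pos_INR.
apply Rmult_le_compat_r; [apply Rabs_pos |].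
rewrite <- (Rmult_1_r (INR k)) at 2.
apply Rmult_le_compat_l; [apply pos_INR |].
rewrite <- RPow_abs, <- (pow1 (pred k)).
apply pow_incr. split; [apply Rabs_pos |].
apply Rabs_le. unfold Rmin, Rmax in Hcuv. destruct Rle_dec; lra.
Qed.

Lemma energy_conserved (n : nat) (a : R) (u du : R -> R) :
  (forall x, is_derive u x (du x)) ->
  (forall x, is_derive du x (- a * u x ^ (2 * n - 1))) ->
  forall x, INR n * du x ^ 2 + a * u x ^ (2 * n) = INR n * du 0 ^ 2 + a * u 0 ^ (2 * n).
Proof.
intros Hu Hdu.
apply (is_derive_0_const (fun x => INR n * du x ^ 2 + a * u x ^ (2 * n))).
intros x. auto_derive.
- split; [eexists; apply Hdu | split; [eexists; apply Hu | exact I]].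
- rewrite (is_derive_unique (fun y : R => du y) _ _ (Hdu x)).
  rewrite (is_derive_unique (fun y : R => u y) _ _ (Hu x)).
  replace (Init.Nat.pred (n + (n + 0))) with (2 * n - 1)%nat by lia.
  rewrite Nat.add_0_r, plus_INR. ring.
Qed.

Lemma energy_bounded (n : nat) (a : R) (u du : R -> R) :
  (0 < n)%nat -> 0 < a ->
  (forall x, is_derive u x (du x)) ->
  (forall x, is_derive du x (- a * u x ^ (2 * n - 1))) ->
  u 0 = 1 -> du 0 = 0 -> forall x, -1 <= u x <= 1.
Proof.
intros Hn Ha Hu Hdu Hu0 Hdu0 x.
assert (HE := energy_conserved n a u du Hu Hdu x).
rewrite Hu0, Hdu0, pow1, pow_i, Rmult_0_r, Rplus_0_l in HE by lia.
assert (Hsq : u x ^ 2 <= 1).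
{ destruct (Rle_or_lt (u x ^ 2) 1) as [|Hgt]; [assumption |].
  assert (Hpow := Rlt_pow_R1 _ n Hgt Hn).
  rewrite <- pow_mult in Hpow.
  assert (0 <= INR n * du x ^ 2) by (apply Rmult_le_pos; [apply pos_INR | apply pow2_ge_0]).
  nra. }
split; nra.
Qed.

Lemma ode_unique_bounded (k : nat) (a : R) (u du v dv : R -> R) :
  0 <= a ->
  (forall t, is_derive u t (du t)) -> (forall t, is_derive du t (- a * u t ^ k)) ->
  (forall t, is_derive v t (dv t)) -> (forall t, is_derive dv t (- a * v t ^ k)) ->
  (forall t, -1 <= u t <= 1) -> (forall t, -1 <= v t <= 1) ->
  u 0 = v 0 -> du 0 = dv 0 -> forall t, u t = v t.
Proof.
intros Ha Hu Hdu Hv Hdv Bu Bv Huv0 Hduv0.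
set (E t := (u t - v t) ^ 2 + (du t - dv t) ^ 2).
set (dE t := 2 * (u t - v t) * (du t - dv t) - 2 * a * (du t - dv t) * (u t ^ k - v t ^ k)).
assert (HE : forall t, is_derive E t (dE t)).
{ intros t. unfold E, dE. auto_derive.
  - repeat split; eexists; eauto.
  - rewrite (is_derive_unique (fun y : R => u y) _ _ (Hu t)),
      (is_derive_unique (fun y : R => du y) _ _ (Hdu t)),
      (is_derive_unique (fun y : R => v y) _ _ (Hv t)),
      (is_derive_unique (fun y : R => dv y) _ _ (Hdv t)).
    ring. }
assert (Hbound : forall t, Rabs (dE t) <= (1 + a * INR k) * E t).
{ intros t. unfold dE, E.
  set (p := Rabs (u t - v t)). set (q := Rabs (du t - dv t)).
  assert (Hlip := Rabs_pow_sub_le k _ _ (Bu t) (Bv t)).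
  assert (0 <= p) by apply Rabs_pos. assert (0 <= q) by apply Rabs_pos.
  assert (Hpq : 2 * p * q <= (u t - v t) ^ 2 + (du t - dv t) ^ 2).
  { rewrite <- (pow2_abs (u t - v t)), <- (pow2_abs (du t - dv t)). fold p q.
    assert (0 <= (p - q) ^ 2) by apply pow2_ge_0. lra. }
  eapply Rle_trans; [apply Rabs_triang |].
  rewrite Rabs_Ropp, !Rabs_mult, (Rabs_pos_eq 2), (Rabs_pos_eq a) by lra. fold p q.
  assert (0 <= INR k) by apply pos_INR.
  assert (2 * a * q * Rabs (u t ^ k - v t ^ k) <= a * INR k * (2 * p * q)).
  { replace (a * INR k * (2 * p * q)) with (2 * a * q * (INR k * p)) by ring.
    apply Rmult_le_compat_l; [nra | exact Hlip]. }
  assert (0 <= a * INR k) by nra.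
  nra. }
intros t.
assert (HE0 := gronwall_zero E dE (1 + a * INR k) HE
  (fun t => Rplus_le_le_0_compat _ _ (pow2_ge_0 _) (pow2_ge_0 _)) Hbound).
assert (Ht : E t = 0) by (apply HE0; unfold E; rewrite Huv0, Hduv0; ring).
apply Rminus_diag_uniq. destruct (Req_dec (u t - v t) 0) as [| Hne]; [assumption |].
exfalso. apply (pow_nonzero _ 2 Hne), (Rplus_eq_0_l _ _ (pow2_ge_0 _) (pow2_ge_0 _) Ht).
Qed.

Lemma is_derive_mult_Rpower (p q : R -> R) (dp dq b z : R) :
  is_derive p z dp -> is_derive q z dq -> 0 < q z ->
  is_derive (fun z => p z * Rpower (q z) b) z
    ((dp * q z + b * p z * dq) * Rpower (q z) (b - 1)).
Proof.
intros Hp Hq Hqz. unfold Rpower. auto_derive.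
- repeat split; [now exists dp | now exists dq | lra].
- rewrite (is_derive_unique (fun y : R => p y) _ _ Hp),
    (is_derive_unique (fun y : R => q y) _ _ Hq).
  replace ((b - 1) * ln (q z)) with (b * ln (q z) + - ln (q z)) by ring.
  rewrite exp_plus, exp_Ropp, exp_ln by lra. field. lra.
Qed.

Lemma Rpower_3_2 x : 0 < x -> Rpower x (3 / 2) = x * sqrt x.
Proof.
intros Hx. replace (3 / 2) with (1 + / 2) by field.
rewrite Rpower_plus, Rpower_1, Rpower_sqrt; lra.
Qed.

Definition dbl_num (z : R) : R := 2 * z ^ 4 + 2 * z ^ 2 - 1.
Definition dbl_den (z : R) : R := 1 + 8 * z ^ 2 + 8 * z ^ 6 - 8 * z ^ 8.
(* On [-1, 1] this is dbl_num z / sqrt (dbl_den z) (see dbl_div); the Rpower form lets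
   is_derive_mult_Rpower compute its derivatives. *)
Definition dbl (z : R) : R := dbl_num z * Rpower (dbl_den z) (- / 2).

Definition dbl_num' (z : R) : R := 8 * z ^ 3 + 4 * z.
Definition dbl_den' (z : R) : R := 16 * z + 48 * z ^ 5 - 64 * z ^ 7.
Definition dbl_num'' (z : R) : R := 24 * z ^ 2 + 4.
Definition dbl_den'' (z : R) : R := 16 + 240 * z ^ 4 - 448 * z ^ 6.

Definition dbl1_num (z : R) : R :=
  dbl_num' z * dbl_den z + - / 2 * dbl_num z * dbl_den' z.
Definition dbl1_num' (z : R) : R :=
  dbl_num'' z * dbl_den z + dbl_num' z * dbl_den' z
  + - / 2 * (dbl_num' z * dbl_den' z + dbl_num z * dbl_den'' z).
Definition dbl2_num (z : R) : R :=
  dbl1_num' z * dbl_den z + (- / 2 - 1) * dbl1_num z * dbl_den' z.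

Definition dbl1 (z : R) : R := dbl1_num z * Rpower (dbl_den z) (- / 2 - 1).
Definition dbl2 (z : R) : R := dbl2_num z * Rpower (dbl_den z) (- / 2 - 1 - 1).

Lemma is_derive_dbl_den z : is_derive dbl_den z (dbl_den' z).
Proof. unfold dbl_den, dbl_den'. auto_derive; [exact I | ring]. Qed.

Lemma is_derive_dbl z : 0 < dbl_den z -> is_derive dbl z (dbl1 z).
Proof.
intros Hz. apply is_derive_mult_Rpower; [| apply is_derive_dbl_den | exact Hz].
unfold dbl_num, dbl_num'. auto_derive; [exact I | ring].
Qed.

Lemma is_derive_dbl1 z : 0 < dbl_den z -> is_derive dbl1 z (dbl2 z).
Proof.
intros Hz. apply is_derive_mult_Rpower; [| apply is_derive_dbl_den | exact Hz].
unfold dbl1_num, dbl1_num', dbl_num, dbl_num', dbl_num'', dbl_den, dbl_den', dbl_den''.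
auto_derive; [exact I | ring].
Qed.

Lemma dbl_ode z : 0 < dbl_den z ->
  (1 - z ^ 6) * dbl2 z - 3 * z ^ 5 * dbl1 z = - 12 * dbl z ^ 5.
Proof.
intros Hz. unfold dbl, dbl1, dbl2.
set (r := Rpower (dbl_den z) (- / 2 - 1 - 1)).
assert (Hr1 : Rpower (dbl_den z) (- / 2 - 1) = dbl_den z * r).
{ unfold r. replace (- / 2 - 1) with (- / 2 - 1 - 1 + 1) at 1 by ring.
  rewrite Rpower_plus, Rpower_1 by exact Hz. ring. }
assert (Hr5 : Rpower (dbl_den z) (- / 2) ^ 5 = r).
{ unfold r. rewrite <- Rpower_pow, Rpower_mult by apply exp_pos. f_equal. simpl INR. field. }
rewrite Rpow_mult_distr, Hr1, Hr5.
unfold dbl2_num, dbl1_num', dbl1_num, dbl_num, dbl_num', dbl_num'', dbl_den, dbl_den', dbl_den''.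
field.
Qed.

Lemma dbl_den_ge1 z : -1 <= z <= 1 -> 1 <= dbl_den z.
Proof.
intros Hz. assert (Hy : 0 <= z ^ 2 <= 1) by nra.
assert (0 <= (z ^ 2) ^ 3 * (1 - z ^ 2)) by (apply Rmult_le_pos; [apply pow_le |]; lra).
unfold dbl_den. nra.
Qed.

Lemma dbl_1 : dbl 1 = 1.
Proof.
unfold dbl, dbl_num, dbl_den.
replace (1 + 8 * 1 ^ 2 + 8 * 1 ^ 6 - 8 * 1 ^ 8) with (3 * 3) by ring.
rewrite Rpower_Ropp, Rpower_sqrt, sqrt_square by lra. field.
Qed.

Section Cleaf3.

Variables f df : R -> R.
Hypothesis Hf : forall x, is_derive f x (df x).
Hypothesis Hdf : forall x, is_derive df x (- 3 * f x ^ 5).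
Hypothesis Hf0 : f 0 = 1.
Hypothesis Hdf0 : df 0 = 0.

Lemma cleaf3_bounded x : -1 <= f x <= 1.
Proof. apply (energy_bounded 3 3 f df); auto; lra. Qed.

Lemma cleaf3_energy x : df x ^ 2 = 1 - f x ^ 6.
Proof.
assert (H := energy_conserved 3 3 f df Hf Hdf x).
change (2 * 3)%nat with 6%nat in H.
replace (INR 3) with 3 in H by (simpl; ring).
rewrite Hf0, Hdf0, pow1, pow_i in H by lia. lra.
Qed.

Lemma dbl_cleaf3_derive t : is_derive (fun t => dbl (f t)) t (df t * dbl1 (f t)).
Proof.
assert (Hden : 0 < dbl_den (f t)) by (generalize (dbl_den_ge1 _ (cleaf3_bounded t)); lra).
apply (is_derive_comp dbl f); [apply (is_derive_dbl _ Hden) | apply Hf].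
Qed.

Lemma dbl_cleaf3_derive2 t :
  is_derive (fun t => df t * dbl1 (f t)) t (- 12 * dbl (f t) ^ 5).
Proof.
assert (Hden : 0 < dbl_den (f t)) by (generalize (dbl_den_ge1 _ (cleaf3_bounded t)); lra).
rewrite <- (dbl_ode _ Hden), <- (cleaf3_energy t).
auto_derive.
- repeat split; eexists; [apply Hdf | apply (is_derive_dbl1 _ Hden) | apply Hf].
- rewrite (is_derive_unique (fun y : R => df y) _ _ (Hdf t)),
    (is_derive_unique (fun y : R => f y) _ _ (Hf t)),
    (is_derive_unique (fun y : R => dbl1 y) _ _ (is_derive_dbl1 _ Hden)).
  ring.
Qed.

Lemma cleaf3_double t : f (2 * t) = dbl (f t).
Proof.
assert (Hu : forall t, is_derive (fun t => f (2 * t)) t (2 * df (2 * t))).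
{ intros s. auto_derive.
  - now exists (df (2 * s)).
  - rewrite (is_derive_unique (fun y : R => f y) _ _ (Hf _)). ring. }
assert (Hdu : forall t, is_derive (fun t => 2 * df (2 * t)) t (- 12 * f (2 * t) ^ 5)).
{ intros s. auto_derive.
  - now exists (- 3 * f (2 * s) ^ 5).
  - rewrite (is_derive_unique (fun y : R => df y) _ _ (Hdf _)). ring. }
assert (Hbound : forall t, -1 <= dbl (f t) <= 1).
{ apply (energy_bounded 3 12 (fun t => dbl (f t)) (fun t => df t * dbl1 (f t)));
    [lia | lra | apply dbl_cleaf3_derive | apply dbl_cleaf3_derive2 | | ].
  - rewrite Hf0. apply dbl_1.
  - rewrite Hdf0. ring. }
apply (ode_unique_bounded 5 12 _ _ _ _ ltac:(lra) Hu Hdu dbl_cleaf3_derive dbl_cleaf3_derive2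
         (fun s => cleaf3_bounded (2 * s)) Hbound).
- rewrite Rmult_0_r, Hf0. symmetry. apply dbl_1.
- rewrite Rmult_0_r, Hdf0. ring.
Qed.

End Cleaf3.

Lemma dbl_div z : 0 < dbl_den z -> dbl z = dbl_num z / sqrt (dbl_den z).
Proof. intros Hz. unfold dbl. rewrite Rpower_Ropp, Rpower_sqrt by exact Hz. reflexivity. Qed.

Lemma dbl_sq z : 0 < dbl_den z -> dbl z ^ 2 = dbl_num z ^ 2 / dbl_den z.
Proof.
intros Hz. assert (Hs : 0 < sqrt (dbl_den z)) by (apply sqrt_lt_R0; exact Hz).
rewrite dbl_div by exact Hz. rewrite <- (sqrt_sqrt (dbl_den z)) at 2 by lra.
field. lra.
Qed.

(* With c = dbl z: 1 + c^2 + c^4 = 3 (dbl_q z / dbl_den z)^2 and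
   2 dbl_q z - dbl_den z = dbl_m z ^ 2, which makes every radical of the inversion
   formula explicit. *)
Definition dbl_q (z : R) : R := 1 + 2 * z ^ 2 + 6 * z ^ 4 - 4 * z ^ 6 + 4 * z ^ 8.
Definition dbl_m (z : R) : R := 4 * z ^ 4 - 2 * z ^ 2 + 1.

Lemma sqrt_dbl_quartic z : -1 <= z <= 1 ->
  sqrt (1 + dbl z ^ 2 + dbl z ^ 4) = sqrt 3 * (dbl_q z / dbl_den z).
Proof.
intros Hz. assert (HD := dbl_den_ge1 z Hz).
assert (HQ : 0 < dbl_q z).
{ assert (0 <= z ^ 2 <= 1) by nra.
  assert (0 <= (z ^ 2) ^ 2 * (1 - z ^ 2)) by (apply Rmult_le_pos; [apply pow2_ge_0 | lra]).
  unfold dbl_q. nra. }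
replace (dbl z ^ 4) with ((dbl z ^ 2) ^ 2) by ring.
apply sqrt_lem_1.
- generalize (pow2_ge_0 (dbl z)) (pow2_ge_0 (dbl z ^ 2)). lra.
- apply Rmult_le_pos; [apply sqrt_pos | apply Rdiv_le_0_compat; lra].
- replace (sqrt 3 * (dbl_q z / dbl_den z) * (sqrt 3 * (dbl_q z / dbl_den z)))
    with (sqrt 3 * sqrt 3 * (dbl_q z / dbl_den z) ^ 2) by ring.
  rewrite sqrt_sqrt, dbl_sq by lra.
  unfold dbl_q, dbl_num, dbl_den in *. field. lra.
Qed.

Lemma sqrt_dbl_nested z : -1 <= z <= 1 ->
  let c := dbl z in
  sqrt (-3 - 6 * c ^ 2 + 2 * sqrt 3 * (1 + 2 * c ^ 2) * sqrt (1 + c ^ 2 + c ^ 4))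
  = sqrt 3 * sqrt (1 + 2 * c ^ 2) * (dbl_m z / sqrt (dbl_den z)).
Proof.
intros Hz. cbv zeta. assert (HD := dbl_den_ge1 z Hz).
rewrite (sqrt_dbl_quartic z Hz). set (w := 1 + 2 * dbl z ^ 2).
assert (Hw : 1 <= w) by (unfold w; generalize (pow2_ge_0 (dbl z)); lra).
assert (Hs3 : sqrt 3 * sqrt 3 = 3) by (apply sqrt_sqrt; lra).
assert (Hrad : -3 - 6 * dbl z ^ 2 + 2 * sqrt 3 * w * (sqrt 3 * (dbl_q z / dbl_den z))
               = 3 * w * (dbl_m z ^ 2 / dbl_den z)).
{ replace (2 * sqrt 3 * w * (sqrt 3 * (dbl_q z / dbl_den z)))
    with (2 * (sqrt 3 * sqrt 3) * w * (dbl_q z / dbl_den z)) by ring.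
  rewrite Hs3. unfold w, dbl_m, dbl_q, dbl_den in *. field. lra. }
assert (HsD : 0 < sqrt (dbl_den z)) by (apply sqrt_lt_R0; lra).
rewrite Hrad. apply sqrt_lem_1.
- apply Rmult_le_pos; [lra | apply Rdiv_le_0_compat; [apply pow2_ge_0 | lra]].
- assert (0 < dbl_m z) by (unfold dbl_m; nra).
  apply Rmult_le_pos; [apply Rmult_le_pos; apply sqrt_pos | apply Rdiv_le_0_compat; lra].
- replace (sqrt 3 * sqrt w * (dbl_m z / sqrt (dbl_den z))
           * (sqrt 3 * sqrt w * (dbl_m z / sqrt (dbl_den z))))
    with (sqrt 3 * sqrt 3 * (sqrt w * sqrt w) * dbl_m z ^ 2
          / (sqrt (dbl_den z) * sqrt (dbl_den z))) by (field; lra).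
  rewrite !sqrt_sqrt by lra. field. lra.
Qed.

Lemma dbl_inv_sq z : -1 <= z <= 1 ->
  let c := dbl z in
  z ^ 2 = (c ^ 2 - 1) / (4 * c ^ 2 + 2)
      + sqrt 3 * sqrt (1 + c ^ 2 + c ^ 4) / (2 * sqrt (1 + 4 * c ^ 2 + 4 * c ^ 4))
      + sqrt 3 * c
          * sqrt (-3 - 6 * c ^ 2 + 2 * sqrt 3 * (1 + 2 * c ^ 2) * sqrt (1 + c ^ 2 + c ^ 4))
          / (2 * Rpower (1 + 2 * c ^ 2) (3 / 2)).
Proof.
intros Hz. cbv zeta. assert (HD := dbl_den_ge1 z Hz).
rewrite (sqrt_dbl_nested z Hz), (sqrt_dbl_quartic z Hz). set (c := dbl z).
set (w := 1 + 2 * c ^ 2).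
assert (Hw : 1 <= w) by (unfold w; generalize (pow2_ge_0 c); lra).
assert (Hsw : 0 < sqrt w) by (apply sqrt_lt_R0; lra).
assert (HsD : 0 < sqrt (dbl_den z)) by (apply sqrt_lt_R0; lra).
replace (1 + 4 * c ^ 2 + 4 * c ^ 4) with (w * w) by (unfold w; ring).
rewrite sqrt_square, Rpower_3_2 by lra.
replace (sqrt 3 * c * (sqrt 3 * sqrt w * (dbl_m z / sqrt (dbl_den z))) / (2 * (w * sqrt w)))
  with (sqrt 3 * sqrt 3 * dbl_m z * dbl_num z / (2 * w * (sqrt (dbl_den z) * sqrt (dbl_den z))))
  by (unfold c; rewrite dbl_div by lra; field; lra).
replace (sqrt 3 * (sqrt 3 * (dbl_q z / dbl_den z)) / (2 * w))
  with (sqrt 3 * sqrt 3 * dbl_q z / (2 * w * dbl_den z)) by (field; lra).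
rewrite !sqrt_sqrt by lra.
unfold w, c. rewrite dbl_sq by lra.
assert (0 <= dbl_num z ^ 2) by apply pow2_ge_0.
unfold dbl_m, dbl_q, dbl_num, dbl_den in *. field. repeat split; lra.
Qed.

Theorem mainTheorem15 :
  forall (cleaf3 : R -> R), is_cleaf 3 cleaf3 ->
  forall l : R,
    let c := cleaf3 l in
    (cleaf3 (l / 2)) ^ 2 =
      (c ^ 2 - 1) / (4 * c ^ 2 + 2)
      + sqrt 3 * sqrt (1 + c ^ 2 + c ^ 4) / (2 * sqrt (1 + 4 * c ^ 2 + 4 * c ^ 4))
      + sqrt 3 * c
          * sqrt (-3 - 6 * c ^ 2 + 2 * sqrt 3 * (1 + 2 * c ^ 2) * sqrt (1 + c ^ 2 + c ^ 4))
          / (2 * Rpower (1 + 2 * c ^ 2) (3 / 2)).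
Proof.
intros f [df [Hf [Hdf [Hf0 Hdf0]]]] l c.
assert (Hdf3 : forall x, is_derive df x (- 3 * f x ^ 5)).
{ intros x. replace (- 3) with (- INR 3) by (simpl; ring). apply Hdf. }
assert (Hc : c = dbl (f (l / 2))).
{ unfold c. rewrite <- (cleaf3_double f df Hf Hdf3 Hf0 Hdf0). f_equal. field. }
rewrite Hc. apply dbl_inv_sq, (cleaf3_bounded f df Hf Hdf3 Hf0 Hdf0).
Qed.
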